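(* Let $\mathcal G$ be an aperiodic discrete p.m.p. groupoid. Let $K$ be a standard probability space and assume that $\mu_K$ is not a point mass. Then the discrete p.m.p. groupoid $\mathscr B_K(\mathcal G)$ is principal.
   Context: Discrete p.m.p. groupoid: groupoid with standard Borel structure, Borel unit space, Borel countable-to-one $s,r$, Borel operations, probability measure on the unit space with $\int|xD|=\int|Dx|$ for Borel $D$; aperiodic: $x\mathcal G$ infinite for a.e. $x$; principal (up to null sets): $g\mapsto(r(g),s(g))$ injective on a conull set. $\mathscr B_K(\mathcal G)$: groupoid of pairs $(g,f)$, $f\in K^{s(g)\mathcal G}$, $s(g,f)=(s(g),f)$, $r(g,f)=(r(g),gf)$ with $(gf)(h)=f(g^{-1}h)$, product $(g_1,g_0f)(g_0,f)=(g_1g_0,f)$, unit measure $\int\delta_x\otimes\mu_K^{x\mathcal G}\,d\mu_{\mathcal G^0}(x)$. *)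

From HB Require Import structures.
From mathcomp Require Import all_boot all_order all_algebra.
From mathcomp Require Import all_classical all_reals all_analysis.
Set Implicit Arguments.
Unset Strict Implicit.
Unset Printing Implicit Defensive.
Import Order.TTheory GRing.Theory Num.Theory.
Local Open Scope classical_set_scope.
Local Open Scope ring_scope.

(* Standard Borel spaces: measurable spaces Borel-isomorphic to a Borel *)
Definition standard_borel (R : realType) {d} (T : measurableType d) : Prop :=
  exists f : T -> R,
    [/\ injective f, measurable_fun setT f, measurable (range f)
      & forall A : set T, measurable A -> measurable (f @` A)].

(* Groupoids.  A : arrows, U : units (embedded in A by gid),           *)
(* gs, gr : source and range, gmul g h = g h (defined when gs g = gr h)*)
Record groupoid_axioms {A U : Type} (gs gr : A -> U) (gid : U -> A)
    (gmul : A -> A -> A) (ginv : A -> A) : Prop := GroupoidAxioms {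
  gax_sid : forall u, gs (gid u) = u;
  gax_rid : forall u, gr (gid u) = u;
  gax_smul : forall g h, gs g = gr h -> gs (gmul g h) = gs h;
  gax_rmul : forall g h, gs g = gr h -> gr (gmul g h) = gr g;
  gax_assoc : forall g h k, gs g = gr h -> gs h = gr k ->
      gmul (gmul g h) k = gmul g (gmul h k);
  gax_idl : forall g, gmul (gid (gr g)) g = g;
  gax_idr : forall g, gmul g (gid (gs g)) = g;
  gax_sinv : forall g, gs (ginv g) = gr g;
  gax_rinv : forall g, gr (ginv g) = gs g;
  gax_mulV : forall g, gmul g (ginv g) = gid (gr g);
  gax_Vmul : forall g, gmul (ginv g) g = gid (gs g) }.

Definition card_ext (R : realType) {T : choiceType} (X : set T) : \bar R :=
  counting X.

Definition dpmp_groupoid (R : realType) {dA dU} {A : measurableType dA}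
    {U : measurableType dU} (gs gr : A -> U) (gid : U -> A)
    (gmul : A -> A -> A) (ginv : A -> A) (mu : probability U R) : Prop :=
  [/\ groupoid_axioms gs gr gid gmul ginv,
      standard_borel R A /\ standard_borel R U,
      [/\ measurable_fun setT gid, measurable (range gid),
          measurable_fun setT gs, measurable_fun setT gr &
          forall x : U, countable (gs @^-1` [set x]) /\
                        countable (gr @^-1` [set x])],
      measurable_fun setT ginv /\
      measurable_fun [set p : A * A | gs p.1 = gr p.2]
                     (fun p : A * A => gmul p.1 p.2) &
      (* measure preservation: \int |xD| = \int |Dx| *)
      forall D : set A, measurable D ->
        (\int[mu]_x card_ext R (D `&` gr @^-1` [set x]) =
         \int[mu]_x card_ext R (D `&` gs @^-1` [set x]))%E].

Definition fib {A U : Type} (gr : A -> U) (x : U) : Type := {g : A | gr g = x}.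

Definition aperiodic (R : realType) {dA dU} {A : measurableType dA}
    {U : measurableType dU} (gr : A -> U) (mu : probability U R) : Prop :=
  {ae mu, forall x : U, infinite_set (gr @^-1` [set x])}.

Definition cylinders {I : Type} {dK} (K : measurableType dK) : set (set (I -> K)) :=
  [set C | exists (i : I) (B : set K), measurable B /\ C = (fun f => f i) @^-1` B].

Definition prodspace (I : Type) {dK} (K : measurableType dK) :=
  g_sigma_algebraType (@cylinders I dK K).

Definition is_product_measure (R : realType) (I : Type) {dK}
    {K : measurableType dK} (muK : probability K R)
    (P : probability (prodspace I K) R) : Prop :=
  forall (n : nat) (idx : 'I_n -> I) (B : 'I_n -> set K),
    injective idx -> (forall i, measurable (B i)) ->
    P [set f : prodspace I K | forall i, B i (f (idx i))] =
      (\prod_(i < n) muK (B i))%E.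

Definition is_point_mass (R : realType) {dK} {K : measurableType dK}
    (muK : probability K R) : Prop :=
  exists k : K, forall B : set K, measurable B -> muK B = dirac k B.

Section BK.
Local Unset Implicit Arguments.
Variables (A U K : Type) (gs gr : A -> U) (gid : U -> A)
  (gmul : A -> A -> A) (ginv : A -> A)
  (HG : groupoid_axioms gs gr gid gmul ginv).

Definition BK_unit := {x : U & fib gr x -> K}.
Definition BK_arrow := {g : A & fib gr (gs g) -> K}.

Definition inv_mul_fib (g : A) (h : fib gr (gr g)) : fib gr (gs g) :=
  exist _ (gmul (ginv g) (proj1_sig h))
    (eq_trans (gax_rmul HG (eq_trans (gax_sinv HG g) (esym (proj2_sig h))))
              (gax_rinv HG g)).

Definition BK_act (g : A) (f : fib gr (gs g) -> K) : fib gr (gr g) -> K :=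
  fun h => f (inv_mul_fib g h).

Definition BK_s (a : BK_arrow) : BK_unit := existT _ (gs (projT1 a)) (projT2 a).
Definition BK_r (a : BK_arrow) : BK_unit :=
  existT _ (gr (projT1 a)) (BK_act (projT1 a) (projT2 a)).
End BK.

(* Null sets of units of B_K(G) for the measure
   \int delta_x (x) mu_K^{xG} d mu(x):  for mu-a.e. x the fibre is
   mu_K^{xG}-negligible. *)
Definition BK_null (R : realType) {dU dK} {A : Type} {U : measurableType dU}
    {K : measurableType dK} (gr : A -> U) (mu : probability U R)
    (P : forall x : U, probability (prodspace (fib gr x) K) R)
    (N : set (BK_unit A U K gr)) : Prop :=
  {ae mu, forall x : U,
     (P x).-negligible [set f : prodspace (fib gr x) K | N (existT _ x f)]}.

(* B_K(G) is principal (up to null sets): g |-> (r(g), s(g)) is injective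
   on a conull set of arrows (a set of arrows is null iff its set of
   ranges is null, the arrow measure being the counting measure
   \int |uD| d nu(u)). *)
Definition BK_principal (R : realType) {dU dK} {A : Type}
    {U : measurableType dU} {K : measurableType dK}
    (gs gr : A -> U) (gid : U -> A) (gmul : A -> A -> A) (ginv : A -> A)
    (HG : groupoid_axioms gs gr gid gmul ginv) (mu : probability U R)
    (P : forall x : U, probability (prodspace (fib gr x) K) R) : Prop :=
  exists D : set (BK_arrow A U K gs gr),
    BK_null mu P [set u | exists2 a, D a & @BK_r A U K gs gr gid gmul ginv HG a = u] /\
    forall a1 a2 : BK_arrow A U K gs gr, ~ D a1 -> ~ D a2 ->
      @BK_r A U K gs gr gid gmul ginv HG a1 = @BK_r A U K gs gr gid gmul ginv HG a2 -> @BK_s A U K gs gr a1 = @BK_s A U K gs gr a2 -> a1 = a2.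

From HB Require Import structures.
From mathcomp Require Import all_boot all_order all_algebra.
From mathcomp Require Import all_classical all_reals all_analysis.
From mathcomp Require Import lra.
Set Implicit Arguments.
Unset Strict Implicit.
Unset Printing Implicit Defensive.
Import Order.TTheory GRing.Theory Num.Theory.
Import numFieldNormedType.Exports.
Local Open Scope classical_set_scope.
Local Open Scope ring_scope.

(* Two distinct arrows of B_K(G) with the same source and the same range
   (x, F) produce a non-unit k = g' g^-1 in the isotropy of x such that
   F (k c) = F c for all c in xG.  Fix B with 0 < mu_K(B) = p < 1; it exists
   because a measure on a standard Borel space taking only the values 0 and 1
   is a point mass.  As xG is infinite and c |-> k c is injective without fixed
   points, xG contains n disjoint pairs (c, k c), and a k-invariant F puts both
   points of every pair on the same side of B: an event of mu_K^{xG}-probability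
   (p^2 + (1-p)^2)^n.  Hence the k-invariant F form a null set, and the
   isotropy of x being countable, so do the ranges of non-free arrows. *)

Lemma le0_of_le_expr (R : realType) (q s : R) :
  0 <= q -> q < 1 -> (forall n, s <= q ^+ n) -> s <= 0.
Proof.
move=> q0 q1 sq.
have q_cvg : (GRing.exp q : R^nat) @ \oo --> 0.
  by apply: cvg_expr; rewrite ger0_norm.
rewrite -(cvg_lim _ q_cvg) //; apply: limr_ge; first by apply/cvg_ex; exists 0.
by near=> n; exact: sq.
Unshelve. all: by end_near.
Qed.

Lemma negligible_geometric d (T : measurableType d) (R : realType)
    (mu : {measure set T -> \bar R}) (S : set T) (E : nat -> set T) (q : R) :
  0 <= q -> q < 1 -> (forall n, measurable (E n)) -> (forall n, S `<=` E n) ->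
  (forall n, (mu (E n) <= (q ^+ n)%:E)%E) -> mu.-negligible S.
Proof.
move=> q0 q1 mE SE Eq.
have mcapE : measurable (\bigcap_n E n) by exact: bigcapT_measurable.
exists (\bigcap_n E n); split => //; last by move=> t St n _; exact: SE.
have capE_le n : (mu (\bigcap_n E n) <= (q ^+ n)%:E)%E.
  apply: le_trans (Eq n); apply: le_measure; rewrite ?inE //.
  exact: bigcap_inf.
have capE_fin : mu (\bigcap_n E n) \is a fin_num.
  by rewrite ge0_fin_numE // (le_lt_trans (capE_le 0%N)) // ltry.
apply/eqP; rewrite -measure_le0.
rewrite -[X in (X <= _)%E](fineK capE_fin) lee_fin.
by apply: (le0_of_le_expr q0 q1) => n; rewrite -lee_fin fineK.
Qed.

Lemma negligible_bigcup_countable d (T : measurableType d) (R : realType)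
    (mu : {measure set T -> \bar R}) (I : Type) (J : set I) (F : I -> set T) :
  countable J -> (forall i, J i -> mu.-negligible (F i)) ->
  mu.-negligible (\bigcup_(i in J) F i).
Proof.
move=> /countable_injP[g ginj] Fnegl.
pose G n := \bigcup_(i in J `&` g @^-1` [set n]) F i.
apply: (@negligibleS _ _ _ _ (\bigcup_n G n)).
  by move=> t [i Ji Fit]; exists (g i) => //; exists i.
apply: negligible_bigcup => n.
have [[i [Ji gin]]|noi] := pselect (exists i, J i /\ g i = n).
  apply: negligibleS (Fnegl i Ji) => t [j [Jj gjn] Fjt].
  by have -> : i = j by apply: ginj; rewrite ?inE // gin gjn.
apply: negligibleS (negligible_set0 mu) => t [j [Jj gjn] _].
by apply: noi; exists j.
Qed.

Lemma measure_bigsetU_le d (T : measurableType d) (R : realType)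
    (mu : {measure set T -> \bar R}) (J : Type) (r : seq J) (F : J -> set T) :
  (forall j, measurable (F j)) ->
  (mu (\big[setU/set0]_(j <- r) F j) <= \sum_(j <- r) mu (F j))%E.
Proof.
move=> mF; elim: r => [|j r IH]; first by rewrite !big_nil measure0.
rewrite !big_cons; apply: le_trans (measureU2 _ (mF j) _) _.
  exact: bigsetU_measurable.
by rewrite leeD2l.
Qed.

Lemma measurable_rectangle (I : Type) dK (K : measurableType dK) m
    (idx : 'I_m -> I) (Bs : 'I_m -> set K) :
  (forall j, measurable (Bs j)) ->
  measurable [set F : prodspace I K | forall j, Bs j (F (idx j))].
Proof.
move=> mBs.
have -> : [set F : prodspace I K | forall j, Bs j (F (idx j))] =
    \bigcap_(j in setT) ((fun F => F (idx j)) @^-1` Bs j).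
  by apply/seteqP; split => F /= FB j; [move=> _; exact: FB | exact: (FB j)].
apply: fin_bigcap_measurable => // j _; apply: sub_sigma_algebra.
by exists (idx j), (Bs j).
Qed.

Section product_measure_agreement.
Variables (R : realType) (I : Type) (dK : measure_display)
  (K : measurableType dK) (muK : probability K R)
  (P : probability (prodspace I K) R).
Hypothesis HP : is_product_measure muK P.
Variables (B : set K) (mB : measurable B).

Local Notation p := (fine (muK B)).

Let side (b : bool) : set K := if b then B else ~` B.
Let side_prob (b : bool) : R := if b then p else 1 - p.

Let measurable_side b : measurable (side b).
Proof. by case: b => //; exact: measurableC. Qed.

Let measure_side b : muK (side b) = (side_prob b)%:E.
Proof.
have muB : muK B = p%:E by rewrite fineK // fin_num_measure.
by case: b => //=; rewrite probability_setC // muB.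
Qed.

Variables (n : nat) (e : 'I_(n + n) -> I).

Definition agreement_set : set (prodspace I K) :=
  [set F | forall i, B (F (e (lshift n i))) <-> B (F (e (rshift n i)))].

Let fold_pattern (t : 'I_n -> bool) (j : 'I_(n + n)) : bool :=
  match fintype.split j with inl i | inr i => t i end.

Let pattern_set (t : 'I_n -> bool) : set (prodspace I K) :=
  [set F | forall j, side (fold_pattern t j) (F (e j))].

Let split_lshift (i : 'I_n) : fintype.split (lshift n i) = inl i.
Proof. exact: (unsplitK (inl i)). Qed.
Let split_rshift (i : 'I_n) : fintype.split (rshift n i) = inr i.
Proof. exact: (unsplitK (inr i)). Qed.

Let measurable_pattern_set t : measurable (pattern_set t).
Proof.
by have := measurable_rectangle e (fun j => measurable_side (fold_pattern t j)).
Qed.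

Let agreement_setE :
  agreement_set = \big[setU/set0]_(t : {ffun 'I_n -> bool}) pattern_set t.
Proof.
rewrite -bigcup_seq; apply/seteqP; split => F.
  move=> FB; exists [ffun i : 'I_n => `[< B (F (e (lshift n i))) >]] => /=.
    exact: mem_index_enum.
  move=> j; rewrite /fold_pattern; case: split_ordP => i -> /=; rewrite ffunE.
    by case: asboolP.
  by have := FB i; case: asboolP => /= Bl [lr rl]; [exact: lr | move/rl].
move=> [t _ Ft] i; have := Ft (lshift n i); have := Ft (rshift n i).
by rewrite /fold_pattern split_lshift split_rshift; case: (t i).
Qed.

Lemma measurable_agreement_set : measurable agreement_set.
Proof. by rewrite agreement_setE; apply: bigsetU_measurable => t _. Qed.

Hypothesis e_inj : injective e.

Let measure_pattern_set t :
  P (pattern_set t) = (\prod_(i < n) side_prob (t i) ^+ 2)%:E.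
Proof.
rewrite (HP e_inj (fun j => measurable_side (fold_pattern t j))) big_split_ord.
rewrite /fold_pattern; under eq_bigr do rewrite split_lshift measure_side.
under [X in _ _ X = _]eq_bigr do rewrite split_rshift measure_side.
by rewrite !prodEFin /= -EFinM -big_split.
Qed.

Lemma measure_agreement_set_le :
  (P agreement_set <= ((p ^+ 2 + (1 - p) ^+ 2) ^+ n)%:E)%E.
Proof.
rewrite agreement_setE; apply: le_trans (measure_bigsetU_le _ _ _) _.
  exact: measurable_pattern_set.
rewrite (eq_bigr (fun t : {ffun 'I_n -> bool} =>
    (\prod_i side_prob (t i) ^+ 2)%:E)); last first.
  by move=> t _; exact: measure_pattern_set.
rewrite sumEFin lee_fin.
rewrite -(bigA_distr_bigA (fun (_ : 'I_n) b => side_prob b ^+ 2)) /=.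
by rewrite prodr_const card_ord big_bool.
Qed.

End product_measure_agreement.

Lemma exists_orbit_pairs (T : choiceType) (sigma : T -> T) :
    infinite_set [set: T] -> injective sigma -> (forall c, sigma c <> c) ->
  forall n, exists e : 'I_(n + n) -> T,
    injective e /\ forall i, e (rshift n i) = sigma (e (lshift n i)).
Proof.
move=> Tinf sigma_inj sigma_free n.
have [s [size_s uniq_s]] :
    exists s : seq T, size s = n /\ uniq (s ++ map sigma s).
  elim: n => [|n [s [size_s uniq_s]]]; first by exists [::].
  pose S := s ++ map sigma s.
  have finS : finite_set ([set` S] `|` sigma @^-1` [set` S]).
    rewrite finite_setU; split; first exact: finite_seq.
    by apply: finite_preimage (finite_seq S) => ? ? _ _; exact: sigma_inj.
  have [c [_ /not_orP[cS sigma_cS]]] :=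
    infinite_setN0 (infinite_setD Tinf finS).
  exists (c :: s); split; first by rewrite /= size_s.
  rewrite /= -cat1s uniq_catCA /= -/S.
  have c_sigma_c : (c == sigma c) = false by apply/eqP => /esym/sigma_free.
  have /negP : ~ (c \in S) by [].
  have /negP : ~ (sigma c \in S) by [].
  by rewrite /S !mem_cat !inE c_sigma_c uniq_s !negb_or => -> /andP[-> ->].
have [x0 _] := infinite_setN0 Tinf.
exists (fun j => nth x0 (s ++ map sigma s) j); split.
  move=> j j' /eqP; rewrite nth_uniq ?size_cat ?size_map ?size_s //.
  by move/eqP/ord_inj.
move=> i /=; rewrite !nth_cat size_s ltn_ord ltnNge leq_addr /= addKn.
by rewrite (nth_map x0) // size_s.
Qed.

Section zero_one_measure.
Variables (R : realType) (d : measure_display) (K : measurableType d)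
  (mu : probability K R) (f : K -> R).
Hypotheses (f_inj : injective f) (mf : measurable_fun setT f).
Hypothesis mu01 : forall B, measurable B -> mu B = 0%E \/ mu B = 1%E.

Let below (q : rat) : set K := f @^-1` `]-oo, ratr q].

Let measurable_below q : measurable (below q).
Proof. by rewrite -[below q]setTI; apply: mf => //; exact: measurable_itv. Qed.

(* Conull by the 0-1 law, and at most a point since f is injective and the
   rationals are dense. *)
Let atom : set K := [set y | forall q, below q y <-> mu (below q) = 1%E].

Let setT_not_negligible : ~ mu.-negligible setT.
Proof.
move=> /(measure_negligible measurableT) muT0.
have : mu setT = 0%E by exact: muT0.
by rewrite probability_setT => /eqP; rewrite onee_eq0.
Qed.

Let negligible_not_atom : mu.-negligible (~` atom).
Proof.
pose bad q := if mu (below q) == 1%E then ~` below q else below q.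
apply: (@negligibleS _ _ _ _ (\bigcup_(q in [set: rat]) bad q)).
  move=> y /existsNP[q not_iff]; exists q => //; rewrite /bad.
  case: eqP => mu_q; first by move=> bqy; apply: not_iff; split.
  by apply: contrapT => nbqy; apply: not_iff; split => // /mu_q.
apply: negligible_bigcup_countable => // q _; rewrite /bad.
case: eqP => [mu_q|/eqP mu_q].
  exists (~` below q); split => //; first exact: measurableC.
  have := probability_setC mu (measurable_below q).
  by rewrite mu_q subee // => mu0; exact: mu0.
exists (below q); split => //.
by have [|/eqP] := mu01 (measurable_below q); last rewrite (negbTE mu_q).
Qed.

Let atom_subsingleton y y' : atom y -> atom y' -> y = y'.
Proof.
have no_gap z z' : atom z -> atom z' -> ~ f z < f z'.
  move=> az az' /rat_in_itvoo[q]; rewrite in_itv /= => /andP[zq qz'].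
  have /az/az' : below q z by rewrite /below /= in_itv /= ltW.
  by rewrite /below /= in_itv /= leNgt qz'.
move=> ay ay'; apply: f_inj.
case: (ltgtP (f y) (f y')) => // lt.
  by case: (no_gap y y').
by case: (no_gap y' y).
Qed.

Lemma point_mass_of_zero_one : is_point_mass mu.
Proof.
have [k atom_k] : exists k, atom k.
  apply: contrapT => no_atom; apply: setT_not_negligible.
  apply: negligibleS negligible_not_atom => y _ atom_y.
  by apply: no_atom; exists y.
have sub_not_atom C : ~ C k -> C `<=` ~` atom.
  by move=> nCk y Cy /atom_subsingleton /(_ atom_k) ky; apply: nCk; rewrite -ky.
exists k => C mC; rewrite diracE.
case: (boolP (k \in C)) => [/set_mem Ck|/negP kC].
  have [/negligibleP C0|//] := mu01 mC; exfalso; apply: setT_not_negligible.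
  rewrite -(setUv C); apply: negligibleU (C0 mC) _.
  by apply: negligibleS negligible_not_atom; apply: sub_not_atom.
apply/negligibleP => //; apply: negligibleS negligible_not_atom.
by apply: sub_not_atom => Ck; apply: kC; rewrite inE.
Qed.

End zero_one_measure.

Lemma not_point_mass_nontrivial_set (R : realType) d (K : measurableType d)
    (mu : probability K R) :
  standard_borel R K -> ~ is_point_mass mu ->
  exists2 B, measurable B & 0 < fine (mu B) < 1.
Proof.
move=> [f [f_inj mf _ _]] not_dirac; apply: contrapT => no_B; apply: not_dirac.
apply: (point_mass_of_zero_one f_inj mf) => B mB.
have muB : mu B = (fine (mu B))%:E by rewrite fineK // fin_num_measure.
have := fine_ge0 (measure_ge0 mu B); have := probability_le1 mu mB.
rewrite muB lee_fin !le_eqVlt => /orP[/eqP->|lt1] /orP[/eqP<-|gt0];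
  [by right|by right|by left|].
by exfalso; apply: no_B; exists B => //; rewrite gt0 lt1.
Qed.

Section groupoid_algebra.
Variables (A U : Type) (gs gr : A -> U) (gid : U -> A)
  (gmul : A -> A -> A) (ginv : A -> A).
Hypothesis HG : groupoid_axioms gs gr gid gmul ginv.

Lemma gmulKg k c : gs k = gr c -> gmul (ginv k) (gmul k c) = c.
Proof.
move=> kc; rewrite -(gax_assoc HG) ?(gax_sinv HG) //.
by rewrite (gax_Vmul HG) kc (gax_idl HG).
Qed.

Lemma gmul_fixed_unit k c : gs k = gr c -> gmul k c = c -> k = gid (gr c).
Proof.
move=> kc kcc; rewrite -[k](gax_idr HG) kc -(gax_mulV HG).
by rewrite -(gax_assoc HG) ?(gax_rinv HG) // kcc.
Qed.

Lemma gdiv_unit_eq g g' :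
  gs g' = gs g -> gmul g' (ginv g) = gid (gr g) -> g' = g.
Proof.
move=> sg' g'g; rewrite -[g'](gax_idr HG) sg' -(gax_Vmul HG).
by rewrite -(gax_assoc HG) ?(gax_sinv HG) ?(gax_rinv HG) // g'g (gax_idl HG).
Qed.

End groupoid_algebra.

Section isotropy_invariance.
Variables (A U K : Type) (gs gr : A -> U) (gid : U -> A)
  (gmul : A -> A -> A) (ginv : A -> A).
Hypothesis HG : groupoid_axioms gs gr gid gmul ginv.

Definition translation_invariant (x : U) (k : A) (F : fib gr x -> K) : Prop :=
  forall w w' : fib gr x, sval w' = gmul k (sval w) -> F w' = F w.

Lemma BK_unit_eq_app (u v : BK_unit A U K gr) : u = v ->
  forall (w : fib gr (projT1 u)) (w' : fib gr (projT1 v)),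
  sval w = sval w' -> projT2 u w = projT2 v w'.
Proof.
move=> <- [c wc] [c' wc'] /= cc'; subst c'.
by rewrite (Prop_irrelevance wc wc').
Qed.

Local Notation BK_r := (@BK_r A U K gs gr gid gmul ginv HG).
Local Notation BK_s := (@BK_s A U K gs gr).

Lemma BK_coincident_invariant (a a' : BK_arrow A U K gs gr)
    (u : BK_unit A U K gr) :
  a' <> a -> BK_r a' = BK_r a -> BK_s a' = BK_s a -> BK_r a = u ->
  exists k, [/\ gs k = projT1 u, gr k = projT1 u, k <> gid (projT1 u)
    & translation_invariant k (projT2 u)].
Proof.
case: a a' => g f [g' f'] a'_ne_a r_eq s_eq <-.
have sg' : gs g' = gs g := f_equal (@projT1 _ _) s_eq.
have rg' : gr g' = gr g := f_equal (@projT1 _ _) r_eq.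
have g'_ginv : gs g' = gr (ginv g) by rewrite (gax_rinv HG).
exists (gmul g' (ginv g)); split.
- by rewrite (gax_smul HG g'_ginv) (gax_sinv HG).
- by rewrite (gax_rmul HG g'_ginv).
- move=> /(gdiv_unit_eq HG sg') g'g; subst g'; apply: a'_ne_a.
  by congr existT; apply: funext => w; exact: (BK_unit_eq_app s_eq erefl).
move=> w w' w'E.
pose v : fib gr (gr g') := exist _ (sval w') (etrans (svalP w') (esym rg')).
rewrite -(BK_unit_eq_app r_eq (w := v) (w' := w') erefl) /= /BK_act.
apply: (BK_unit_eq_app s_eq) => /=.
rewrite w'E (gax_assoc HG) ?(gax_sinv HG) ?(svalP w) //.
by rewrite (gmulKg HG) // (gax_rmul HG) ?(gax_sinv HG) ?(svalP w).
Qed.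

End isotropy_invariance.

Section invariant_negligible.
Variables (R : realType) (A U : Type) (gs gr : A -> U) (gid : U -> A)
  (gmul : A -> A -> A) (ginv : A -> A).
Hypothesis HG : groupoid_axioms gs gr gid gmul ginv.
Variables (dK : measure_display) (K : measurableType dK) (muK : probability K R)
  (x : U) (P : probability (prodspace (fib gr x) K) R).
Hypothesis HP : is_product_measure muK P.
Variable k : A.
Hypotheses (ks : gs k = x) (kr : gr k = x) (k_nonunit : k <> gid x).
Hypothesis fib_infinite : infinite_set (gr @^-1` [set x]).

(* [{classic _}] provides the choiceType structure used by exists_orbit_pairs. *)
Let lmul (w : fib gr x) : {classic (fib gr x)} :=
  exist _ (gmul k (sval w))
    (etrans (gax_rmul HG (etrans ks (esym (svalP w)))) kr).

Lemma translation_invariant_negligible (B : set K) :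
  measurable B -> 0 < fine (muK B) < 1 ->
  P.-negligible [set F | translation_invariant gmul k F].
Proof.
move=> mB /andP[p_gt0 p_lt1].
have fibT_infinite : infinite_set [set: {classic (fib gr x)}].
  have fibE : gr @^-1` [set x] = sval @` [set: {classic (fib gr x)}].
    apply/seteqP; split => [c cx|_ [w _ <-]]; last exact: svalP.
    by exists (exist _ c cx).
  by move=> /(finite_image sval); rewrite -fibE.
have lmul_inj : injective lmul.
  move=> [c cx] [c' c'x] /(congr1 sval) /= kcc'; apply: eq_exist.
  have [kc kc'] : gs k = gr c /\ gs k = gr c' by rewrite ks cx c'x.
  by rewrite -(gmulKg HG kc) kcc' (gmulKg HG kc').
have lmul_free w : lmul w <> w.
  move=> /(congr1 sval) /= /(gmul_fixed_unit HG); rewrite (svalP w) ks.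
  by move=> /(_ erefl).
have pairs n := exists_orbit_pairs fibT_infinite lmul_inj lmul_free n.
pose e n := projT1 (cid (pairs n)).
apply: (@negligible_geometric _ _ _ _ _ (fun n => agreement_set B (e n))
  (fine (muK B) ^+ 2 + (1 - fine (muK B)) ^+ 2)).
- by rewrite addr_ge0 ?sqr_ge0.
- by nra.
- by move=> n; exact: measurable_agreement_set.
- move=> n F F_inv i; rewrite /e; case: cid => /= en [_ ->].
  by rewrite (F_inv _ (lmul (en (lshift n i))) erefl).
- move=> n; rewrite /e; case: cid => /= en [en_inj _].
  exact: measure_agreement_set_le.
Qed.

End invariant_negligible.

Theorem proposition2p26 (R : realType)
    (dA dU : measure_display) (A : measurableType dA) (U : measurableType dU)
    (gs gr : A -> U) (gid : U -> A) (gmul : A -> A -> A) (ginv : A -> A)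
    (mu : probability U R)
    (HG : groupoid_axioms gs gr gid gmul ginv)
    (Hdpmp : dpmp_groupoid gs gr gid gmul ginv mu)
    (Hap : aperiodic gr mu)
    (dK : measure_display) (K : measurableType dK) (muK : probability K R)
    (HK : standard_borel R K)
    (HnotDirac : ~ is_point_mass muK)
    (P : forall x : U, probability (prodspace (fib gr x) K) R)
    (HP : forall x : U, is_product_measure muK (P x)) :
  BK_principal HG mu P.
Proof.
pose r := @BK_r A U K gs gr gid gmul ginv HG.
pose s := @BK_s A U K gs gr.
exists [set a | exists2 a', a' <> a & r a' = r a /\ s a' = s a].
split; last first.
  move=> a1 a2 not_D1 _ r_eq s_eq; apply: contrapT => a1_ne_a2; apply: not_D1.
  by exists a2; [move=> a21; apply: a1_ne_a2 | split].
have [B mB B_nontrivial] := not_point_mass_nontrivial_set HK HnotDirac.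
have [_ _ [_ _ _ _ fib_countable] _ _] := Hdpmp.
apply: filterS Hap => x fib_infinite.
pose isotropy := [set k | [/\ gs k = x, gr k = x & k <> gid x]].
apply: (@negligibleS _ _ _ _
  (\bigcup_(k in isotropy)
     [set F : prodspace (fib gr x) K | translation_invariant gmul k F])).
  move=> F [a [a' a'_ne_a [r_eq s_eq]] r_a].
  have [k [? ? ? k_inv]] := BK_coincident_invariant a'_ne_a r_eq s_eq r_a.
  by exists k.
apply: negligible_bigcup_countable => [|k [ks kr k_nonunit]].
  by apply: sub_countable (fib_countable x).2; apply: subset_card_le => k [].
exact: (translation_invariant_negligible HG (HP x) ks kr k_nonunit fib_infinite
  mB B_nontrivial).
Qed.
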